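(* Let $\mathcal{L}$ and $\mathcal{L}'$ be lattices and let $l,l':\mathbb{N}\to\mathbb{N}$ be strictly positive functions. If $\mathcal{L}$ is $\Omega(l(n))$ and $\mathcal{L}'$ is $\Omega(l'(n))$, then the product lattice $\mathcal{L}\times\mathcal{L}'$ is $\Omega\big(l(\lfloor n/2\rfloor)\,l'(\lfloor n/2\rfloor)\big)$.
   Context: A lattice means a partially ordered set $(\mathcal{L},\sqsubseteq)$ with least element $\bot$ in which any two elements have a least upper bound $\sqcup$; $\bigsqcup S$ denotes the least upper bound of a finite set ($\bigsqcup\emptyset=\bot$). The product lattice $\mathcal{L}\times\mathcal{L}'$ has pairs ordered componentwise. The closure set of a finite $S$ is $C(S)=\{\bigsqcup S' : S'\subseteq S\}$ and $CS_{\mathcal{L}}(n)=\max\{|C(S)| : S\subseteq\mathcal{L}\text{ finite}, |S|\le n\}$. For $f,g:\mathbb{N}\to\mathbb{N}$, $f$ is $\Omega(g)$ iff there exist $N_0\in\mathbb{N}$ and rational $C>0$ with $f(n)\ge Cg(n)$ for all $n\ge N_0$. A lattice $\mathcal{L}$ is $\Omega(f(n))$ iff $CS_{\mathcal{L}}(n)$ is $\Omega(f(n))$. *)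

From HB Require Import structures.
From mathcomp Require Import all_boot all_order all_algebra.
From mathcomp Require Import finmap.
From mathcomp Require Import boolp.
Set Implicit Arguments. Unset Strict Implicit. Unset Printing Implicit Defensive.
Import Order.TTheory GRing.Theory Num.Theory.
Local Open Scope order_scope.
Local Open Scope fset_scope.

(* A "lattice" in the sense of the paper: a partial order with a least element
   in which any two elements have a least upper bound, i.e. a
   bJoinSemilatticeType. *)

Section Closure.
Context {disp : Order.disp_t} {L : bJoinSemilatticeType disp}.

Definition bigjoin (S : {fset L}) : L := \join_(x <- S) x.

Definition closure_set (S : {fset L}) : {fset L} :=
  [fset bigjoin S' | S' in fpowerset S].

Definition CS_val (n m : nat) : Prop :=
  exists S : {fset L}, (#|` S| <= n)%N /\ #|` closure_set S| = m.

Lemma CS_val_ex n : exists m, `[< CS_val n m >].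
Proof. exists 1%N; apply/asboolP; exists fset0; split => //.
rewrite /closure_set.
have -> : fpowerset (fset0 : {fset L}) = [fset fset0].
  apply/fsetP => B; rewrite fpowersetE inE fsubset0; by [].
apply/eqP/cardfs1P; exists (bigjoin fset0); apply/fsetP=> y.
rewrite inE; apply/imfsetP/eqP => [[B] |->]; first by rewrite inE => /eqP ->.
by exists fset0; rewrite ?inE.
Qed.

Lemma card_closure_le S : (#|` closure_set S| <= 2 ^ #|` S|)%N.
Proof.
apply: leq_trans (leq_imfset_card _ _ _) _.
by rewrite card_fpowerset.
Qed.

Lemma CS_val_bound n m : `[< CS_val n m >] -> (m <= 2 ^ n)%N.
Proof. move/asboolP=> [S [hS <-]].
apply: leq_trans (card_closure_le S) _.
by rewrite leq_pexp2l.
Qed.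

Definition CS (n : nat) : nat := ex_maxn (CS_val_ex n) (@CS_val_bound n).

End Closure.
Arguments CS {disp} L n.

Definition bigOmega (f g : nat -> nat) : Prop :=
  exists (N0 : nat) (C : rat), (0 < C)%R /\
    forall n, (N0 <= n)%N -> (C * (g n)%:R <= (f n)%:R)%R.

Definition lattice_Omega {disp : Order.disp_t} (L : bJoinSemilatticeType disp)
  (f : nat -> nat) : Prop := bigOmega (CS L) f.

From HB Require Import structures.
From mathcomp Require Import all_boot all_order all_algebra.
From mathcomp Require Import finmap boolp.
Import Order.TTheory GRing.Theory Num.Theory.
Local Open Scope order_scope.
Local Open Scope fset_scope.

(* If S1 and S2 realise CS_L(k) and CS_L'(k), put S1 on the first axis and S2
   on the second: S = S1 x {bot} u {bot} x S2 has at most 2k elements, and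
   since joins in the product are computed componentwise, C(S) contains
   C(S1) x C(S2).  Hence CS_{LxL'}(2k) >= CS_L(k) * CS_L'(k); monotonicity of
   CS with k = n/2 and multiplicativity of Omega finish the proof. *)

Lemma card_fsetM (K K' : choiceType) (A : {fset K}) (B : {fset K'}) :
  #|` A `*` B| = (#|` A| * #|` B|)%N.
Proof.
rewrite /fsetM (perm_size (enum_imfset2 _ _)); first exact: size_allpairs.
by move=> [? ?] [? ?] _ _ [-> ->].
Qed.

Section ClosureSets.
Context {disp : Order.disp_t} {L : bJoinSemilatticeType disp}.
Implicit Types (S : {fset L}) (x y : L).

Lemma bigjoinP S y : reflect (forall x, x \in S -> x <= y) (bigjoin S <= y).
Proof.
apply: (iffP (joinsP_seq _ _ _ _)) => le_Sy x xS; first exact: le_Sy.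
by move=> _; apply: le_Sy.
Qed.

Lemma bigjoin_sup S x : x \in S -> x <= bigjoin S.
Proof. by move=> xS; apply: (@joins_sup_seq _ _ _ _ predT id x). Qed.

Lemma CS_val_leq {n m} : @CS_val _ L n m -> (m <= CS L n)%N.
Proof. by rewrite /CS; case: ex_maxnP => i _ max_i /asboolP; apply: max_i. Qed.

Lemma CS_valP n : @CS_val _ L n (CS L n).
Proof. by rewrite /CS; case: ex_maxnP => i /asboolP. Qed.

Lemma leq_CS m n : (m <= n)%N -> (CS L m <= CS L n)%N.
Proof.
move=> le_mn; have [S [card_S <-]] := @CS_valP m.
by apply: CS_val_leq; exists S; split; first exact: leq_trans le_mn.
Qed.

End ClosureSets.

Section Product.
Context {d1 d2 : Order.disp_t}
  {L1 : bJoinSemilatticeType d1} {L2 : bJoinSemilatticeType d2}.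
Local Notation L := (L1 *p L2)%type.

Definition axes (S1 : {fset L1}) (S2 : {fset L2}) : {fset L} :=
  [fset (a, \bot) | a in S1] `|` [fset (\bot, b) | b in S2].

Lemma card_axes (S1 : {fset L1}) (S2 : {fset L2}) :
  (#|` axes S1 S2| <= #|` S1| + #|` S2|)%N.
Proof.
apply: leq_trans (leq_card_fsetU _ _).1 _.
by rewrite leq_add // card_imfset // => ? ? [].
Qed.

Lemma axesS (A1 S1 : {fset L1}) (A2 S2 : {fset L2}) :
  A1 `<=` S1 -> A2 `<=` S2 -> axes A1 A2 `<=` axes S1 S2.
Proof.
by move=> /fsubsetP sub1 /fsubsetP sub2; apply: fsetUSS; apply: subset_imfset.
Qed.

Lemma bigjoin_axes (A1 : {fset L1}) (A2 : {fset L2}) :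
  bigjoin (axes A1 A2) = (bigjoin A1, bigjoin A2).
Proof.
apply: le_anti; apply/andP; split.
  apply/bigjoinP => _ /fsetUP [] /imfsetP [x /= xA ->]; rewrite leEprod /=.
    by rewrite le0x andbT bigjoin_sup.
  by rewrite le0x bigjoin_sup.
set J := bigjoin (axes A1 A2).
have le_J (p : L) : p \in axes A1 A2 -> (p.1 <= J.1) && (p.2 <= J.2).
  by move=> /bigjoin_sup; rewrite leEprod.
rewrite leEprod; apply/andP; split; apply/bigjoinP => x xA.
  by apply: (proj1 (andP (le_J (x, \bot) _))); rewrite in_fsetU in_imfset.
by apply: (proj2 (andP (le_J (\bot, x) _))); rewrite in_fsetU orbC in_imfset.
Qed.

Lemma closure_set_axes (S1 : {fset L1}) (S2 : {fset L2}) :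
  closure_set S1 `*` closure_set S2 `<=` closure_set (axes S1 S2).
Proof.
apply/fsubsetP => -[a b]; rewrite in_fsetM /= => /andP [].
move=> /imfsetP [A1 /= sub1 ->] /imfsetP [A2 /= sub2 ->].
rewrite -bigjoin_axes in_imfset // fpowersetE.
by apply: axesS; rewrite -fpowersetE.
Qed.

Lemma CS_mul_leq_double k : (CS L1 k * CS L2 k <= CS L k.*2)%N.
Proof.
have [S1 [card_S1 <-]] := @CS_valP _ L1 k.
have [S2 [card_S2 <-]] := @CS_valP _ L2 k.
have CS_axes : @CS_val _ L k.*2 #|` closure_set (axes S1 S2)|.
  exists (axes S1 S2); split; last by [].
  by rewrite -addnn (leq_trans (card_axes _ _)) ?leq_add.
apply: (leq_trans _ (CS_val_leq CS_axes)).
by rewrite -card_fsetM fsubset_leq_card ?closure_set_axes.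
Qed.

Lemma CS_half_mul_leq n : (CS L1 n./2 * CS L2 n./2 <= CS L n)%N.
Proof.
apply: (leq_trans (CS_mul_leq_double _)); apply: leq_CS.
by rewrite -{2}(odd_double_half n) leq_addl.
Qed.

End Product.

Lemma bigOmega_leq (f f' g : nat -> nat) :
  (forall n, f n <= f' n)%N -> bigOmega f g -> bigOmega f' g.
Proof.
move=> le_ff' [N [C [C_gt0 Cg_le]]]; exists N, C; split => // n le_Nn.
by rewrite (le_trans (Cg_le n le_Nn)) ?ler_nat.
Qed.

Lemma bigOmegaM (f f' g g' : nat -> nat) :
  bigOmega f g -> bigOmega f' g' ->
  bigOmega (fun n => f n * f' n)%N (fun n => g n * g' n)%N.
Proof.
move=> [N [C [C_gt0 Cg_le]]] [N' [C' [C'_gt0 C'g'_le]]].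
exists (maxn N N'), (C * C')%R; split; first exact: mulr_gt0.
move=> n; rewrite geq_max => /andP [le_Nn le_N'n].
rewrite !natrM mulrACA.
by apply: ler_pM; rewrite ?mulr_ge0 ?(ltW C_gt0) ?(ltW C'_gt0) ?Cg_le ?C'g'_le.
Qed.

Lemma bigOmega_half (f g : nat -> nat) :
  bigOmega f g -> bigOmega (fun n => f n./2) (fun n => g n./2).
Proof.
move=> [N [C [C_gt0 Cg_le]]]; exists N.*2, C; split => // n le_2N_n.
by apply: Cg_le; rewrite -(doubleK N) half_leq.
Qed.

Theorem mainTheorem4 (d1 d2 : Order.disp_t)
  (L1 : bJoinSemilatticeType d1) (L2 : bJoinSemilatticeType d2)
  (l l' : nat -> nat)
  (hl : forall n, (0 < l n)%N) (hl' : forall n, (0 < l' n)%N) :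
  lattice_Omega L1 l -> lattice_Omega L2 l' ->
  lattice_Omega (L1 *p L2)%type (fun n => (l n./2 * l' n./2)%N).
Proof.
move=> Omega1 Omega2.
apply: (bigOmega_leq _ _ _ (@CS_half_mul_leq _ _ L1 L2)).
by apply: bigOmegaM; apply: bigOmega_half.
Qed.
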